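(* Consider the uplink access-probability optimization problem $$\max_{\mathbf p=(p_1,\dots,p_N)} \ \eta(\mathbf p)=\sum_{\boldsymbol\sigma\in\mathcal I}\sum_{j=1}^N R_j^{\boldsymbol\sigma}\,\sigma_j\,\pi(\boldsymbol\sigma)$$ subject to $\mathsf{EC}_j(\mathbf p;\theta_j)\ge \mathsf{EB}_j(\theta_j)$ and $0<p_j\le 1$ for all $j=1,\dots,N$, where all quantities are as defined in the context. This optimization problem is non-concave with respect to the access probability vector $\mathbf p$.
   Context: A coordinator with $M$ photo-detectors serves $N$ devices ($N>M$), each with a single LED. In each time slot, device $j$ transmits independently with access probability $p_j$, and its line-of-sight link is unblocked independently with probability $\beta_j\in(0,1]$. A state is a vector $\boldsymbol\sigma=(\sigma_1,\dots,\sigma_N)\in\{0,1\}^N$, where $\sigma_j=1$ means device $j$ transmits and is unblocked. Its probability is $\pi(\boldsymbol\sigma)=\prod_{k=1}^N\big[(1-\sigma_k)(1-p_k\beta_k)+\sigma_k p_k\beta_k\big]$. The set of feasible access states is $\mathcal I=\{\boldsymbol\sigma:\sum_j\sigma_j\le M\}$. In a feasible state $\boldsymbol\sigma$ with $\sigma_j=1$, device $j$ achieves rate $R_j^{\boldsymbol\sigma}=B\log_2(1+\gamma_j^{\boldsymbol\sigma})$. Here $B>0$ is the bandwidth and $\gamma_j^{\boldsymbol\sigma}$ is the SINR of device $j$ under ideal (error-free) MMSE successive interference cancellation at the coordinator: $$\gamma_j^{\boldsymbol\sigma}=\xi^2P_t^2\,\mathbf h_j^T\Big(\sum_{k}\xi^2P_t^2\mathbf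 h_k\mathbf h_k^T+\sigma_{\mathrm{VLC}}^2\mathbf I_M\Big)^{-1}\mathbf h_j .$$ The sum runs over the active devices $k$ decoded after $j$ in the SIC order. The parameters are as follows: - $\mathbf h_j\in\mathbb R_{\ge0}^M$ is the fixed line-of-sight channel gain vector of device $j$; - $\xi>0$ is the detector responsivity; - $P_t>0$ is the transmit power; - $\sigma_{\mathrm{VLC}}^2>0$ is the noise variance. In an infeasible state, no device is decoded and it has rate $0$. The effective capacity of device $j$ with QoS exponent $\theta_j>0$ is $$\mathsf{EC}_j(\mathbf p;\theta_j)=-\frac1{\theta_j}\ln\Big\{1-\sum_{\boldsymbol\sigma\in\mathcal I}\big(1-e^{-\theta_jR_j^{\boldsymbol\sigma}}\big)\sigma_j\pi(\boldsymbol\sigma)\Big\}.$$ $\mathsf{EB}_j(\theta_j)$ is the effective bandwidth of device $j$'s arrival process: $\mathsf{EB}_j(\theta_j)=\frac1{\theta_j}\lim_{t\to\infty}\frac1t\ln\mathbb E[e^{\theta_jA_j(t)}]$, where $A_j(t)$ is the accumulated arrival process of device $j$ over $[0,t)$. A maximization problem is called concave if its objective is concave and its feasible set is convex. *)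

From HB Require Import structures.
From mathcomp Require Import all_boot all_order all_algebra all_fingroup.
From mathcomp Require Import all_classical all_reals all_analysis.
Set Implicit Arguments. Unset Strict Implicit. Unset Printing Implicit Defensive.
Import Order.TTheory GRing.Theory Num.Theory.
Local Open Scope ring_scope.

Section VLC.
Variables (R : realType) (M N : nat).

(* A state sigma : sigma j = true iff device j transmits and is unblocked. *)
Definition state := {ffun 'I_N -> bool}.

Definition state_prob (p beta : 'I_N -> R) (s : state) : R :=
  \prod_(k < N) ((1 - (s k)%:R) * (1 - p k * beta k) + (s k)%:R * (p k * beta k)).

Definition feasible_state (s : state) : bool := (\sum_(k < N) nat_of_bool (s k) <= M)%N.

(* SINR of device j in state s under ideal MMSE-SIC with decoding order
   given by the permutation ord: device k is decoded after j iff
   ord j < ord k. *)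
Definition sinr (h : 'I_N -> 'cV[R]_M) (xi Pt s2 : R) (ord : {perm 'I_N})
    (s : state) (j : 'I_N) : R :=
  let c := xi ^+ 2 * Pt ^+ 2 in
  (c *: ((h j)^T *m invmx (\sum_(k < N | s k && (ord j < ord k)%N)
                               (c *: (h k *m (h k)^T)) + s2%:M) *m h j)) ord0 ord0.

Definition log2 (x : R) : R := ln x / ln 2.

Definition rate (h : 'I_N -> 'cV[R]_M) (B xi Pt s2 : R) (ord : {perm 'I_N})
    (s : state) (j : 'I_N) : R :=
  if feasible_state s && s j then B * log2 (1 + sinr h xi Pt s2 ord s j) else 0.

Definition sum_rate_obj (h : 'I_N -> 'cV[R]_M) (beta : 'I_N -> R) (B xi Pt s2 : R)
    (ord : {perm 'I_N}) (p : 'I_N -> R) : R :=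
  \sum_(s : state | feasible_state s) \sum_(j < N)
     rate h B xi Pt s2 ord s j * (s j)%:R * state_prob p beta s.

Definition eff_cap (h : 'I_N -> 'cV[R]_M) (beta : 'I_N -> R) (B xi Pt s2 : R)
    (ord : {perm 'I_N}) (theta : R) (p : 'I_N -> R) (j : 'I_N) : R :=
  - theta^-1 * ln (1 - \sum_(s : state | feasible_state s)
      (1 - expR (- theta * rate h B xi Pt s2 ord s j)) * (s j)%:R * state_prob p beta s).

Definition feasible_set (h : 'I_N -> 'cV[R]_M) (beta theta EB : 'I_N -> R)
    (B xi Pt s2 : R) (ord : {perm 'I_N}) (p : 'I_N -> R) : Prop :=
  forall j : 'I_N, 0 < p j <= 1 /\
    EB j <= eff_cap h beta B xi Pt s2 ord (theta j) p j.

End VLC.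

Definition convex_comb (R : realType) (N : nat) (t : R) (x y : 'I_N -> R) : 'I_N -> R :=
  fun i => t * x i + (1 - t) * y i.

Definition convex_set (R : realType) (N : nat) (S : ('I_N -> R) -> Prop) : Prop :=
  forall x y (t : R), S x -> S y -> 0 <= t <= 1 -> S (convex_comb t x y).

Definition concave_on (R : realType) (N : nat) (S : ('I_N -> R) -> Prop)
    (f : ('I_N -> R) -> R) : Prop :=
  forall x y (t : R), S x -> S y -> 0 <= t <= 1 ->
    t * f x + (1 - t) * f y <= f (convex_comb t x y).

Definition concave_max_problem (R : realType) (N : nat) (S : ('I_N -> R) -> Prop)
    (f : ('I_N -> R) -> R) : Prop :=
  convex_set S /\ concave_on S f.

From HB Require Import structures.
From mathcomp Require Import all_boot all_order all_algebra all_fingroup.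
From mathcomp Require Import all_classical all_reals all_analysis.
From mathcomp Require Import lra.
Import Order.TTheory GRing.Theory Num.Theory.
Set Implicit Arguments. Unset Strict Implicit. Unset Printing Implicit Defensive.
Local Open Scope ring_scope.

(* Only device 0 gets a nonzero channel, so the sum rate is r = log2 (1 + M)
   times the probability that device 0 is active in a feasible state.  Let
   devices 1, ..., M-1 transmit with probability 1, device 0 with probability a
   and the remaining N - M devices with probability q.  A feasible state with
   device 0 active must then be the state in which exactly the first M devices
   are active, so the objective equals r a (1 - q)^(N - M).  This is not
   concave: at the midpoint (3/4, 3/4) of (1, 1/2) and (1/2, 1) it lies below
   the chord.  Zero effective bandwidths make the QoS constraints hold, since
   effective capacity is nonnegative. *)

Section StateProbability.
Variables (R : realType) (N : nat).
Implicit Types (p beta : 'I_N -> R) (s : state N).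

Lemma state_probE p beta s :
  state_prob p beta s =
  \prod_(k < N) (if s k then p k * beta k else 1 - p k * beta k).
Proof.
by apply: eq_bigr => k _; case: (s k); rewrite /= ?subrr ?subr0 ?mul0r ?mul1r ?addr0 ?add0r.
Qed.

Lemma state_prob_ge0 p beta s :
  (forall k, 0 <= p k * beta k <= 1) -> 0 <= state_prob p beta s.
Proof.
move=> pb01; rewrite state_probE; apply: prodr_ge0 => k _.
by have /andP[pb0 pb1] := pb01 k; case: (s k); rewrite // subr_ge0.
Qed.

Lemma state_prob_eq0 p beta s k :
  ~~ s k -> p k * beta k = 1 -> state_prob p beta s = 0.
Proof. by move=> /negbTE sk pb1; rewrite state_probE (bigD1 k) //= sk pb1 subrr mul0r. Qed.

End StateProbability.

Section PrefixState.
Variables (M N : nat).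
Hypothesis leMN : (M <= N)%N.

Definition prefix_state : state N := [ffun k : 'I_N => (k < M)%N].

Lemma feasible_stateE (s : state N) :
  feasible_state M s = (#|[pred k | s k]| <= M)%N.
Proof.
rewrite /feasible_state -sum1_card [in RHS]big_mkcond.
by congr (_ <= _)%N; apply: eq_bigr => k.
Qed.

Lemma card_prefix : #|[pred k : 'I_N | (k < M)%N]| = M.
Proof.
have widen_inj : injective (widen_ord leMN) by move=> i j /(congr1 val) /= /val_inj.
rewrite -[RHS]card_ord -(card_codom widen_inj).
apply: eq_card => k /=.
apply/idP/codomP => [kM | [i ->]]; last exact: ltn_ord i.
by exists (Ordinal kM); apply: val_inj.
Qed.

Lemma card_prefixC : #|[pred k : 'I_N | ~~ (k < M)%N]| = (N - M)%N.
Proof.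
have := cardC [pred k : 'I_N | (k < M)%N]; rewrite card_ord card_prefix => cardN.
by rewrite -[in RHS]cardN addKn.
Qed.

Lemma feasible_prefix_state : feasible_state M prefix_state.
Proof.
rewrite feasible_stateE -[leqRHS]card_prefix.
by apply/eq_leq/eq_card => k; rewrite !inE ffunE.
Qed.

Lemma feasible_prefix_eq (s : state N) :
  feasible_state M s -> (forall k : 'I_N, (k < M)%N -> s k) -> s = prefix_state.
Proof.
rewrite feasible_stateE => card_s prefix_s.
have sub : [pred k : 'I_N | (k < M)%N] \subset [pred k | s k].
  by apply/fintype.subsetP => k; apply: prefix_s.
have /fintype.subsetP sup : [pred k | s k] \subset [pred k : 'I_N | (k < M)%N].
  by rewrite -(subset_leqif_card sub).2 eqn_leq (subset_leq_card sub) card_prefix card_s.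
apply/ffunP => k; rewrite ffunE; apply/idP/idP; [exact: sup | exact: prefix_s].
Qed.

End PrefixState.

Section PrefixProbability.
Variables (R : realType) (M N : nat).
Hypothesis leMN : (M <= N)%N.
Implicit Types (p beta : 'I_N -> R).

Lemma state_prob_prefix p beta :
  state_prob p beta (prefix_state M N) =
  (\prod_(k < N | (k < M)%N) (p k * beta k)) *
  \prod_(k < N | ~~ (k < M)%N) (1 - p k * beta k).
Proof.
rewrite state_probE (bigID (fun k : 'I_N => (k < M)%N)) /=.
by congr (_ * _); apply: eq_bigr => k kM; rewrite ffunE ?(negbTE kM) ?kM.
Qed.

Lemma sum_prob_feasible_active p beta (j : 'I_N) : (j < M)%N ->
  (forall k : 'I_N, (k < M)%N -> k != j -> p k * beta k = 1) ->
  \sum_(s : state N | feasible_state M s && s j) state_prob p beta s =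
  state_prob p beta (prefix_state M N).
Proof.
move=> jM always_on.
rewrite (bigD1 (prefix_state M N)) ?feasible_prefix_state ?ffunE //=.
rewrite big1 ?addr0 // => s /andP[/andP[feas_s sj] s_neq].
have [k kM sk] : exists2 k : 'I_N, (k < M)%N & ~~ s k.
  apply/exists_inP; apply: contraNT s_neq => /exists_inPn all_s.
  by apply/eqP/feasible_prefix_eq => // k /all_s; rewrite negbK.
by apply: (state_prob_eq0 sk); apply: always_on => //; apply: contraNneq sk => ->.
Qed.

End PrefixProbability.

Lemma eff_cap_ge0 (R : realType) (M N : nat) (h : 'I_N -> 'cV[R]_M) beta B xi Pt s2 ord
    theta p j :
  0 < theta -> (forall s, 0 <= rate h B xi Pt s2 ord s j) ->
  (forall k, 0 <= p k * beta k <= 1) ->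
  0 <= eff_cap h beta B xi Pt s2 ord theta p j.
Proof.
move=> theta0 rate0 pb01.
rewrite /eff_cap mulNr oppr_ge0 pmulr_rle0 ?invr_gt0 //; apply: ln_le0.
rewrite gerBl; apply: sumr_ge0 => s _; apply: mulr_ge0; last exact: state_prob_ge0.
apply: mulr_ge0 => //; rewrite subr_ge0 expR_le1 mulNr oppr_le0.
exact: mulr_ge0 (ltW theta0) (rate0 s).
Qed.

Section Sinr.
Variables (R : realType) (M N : nat).
Implicit Types (h : 'I_N -> 'cV[R]_M) (sigma : state N) (ord : {perm 'I_N}).

Lemma sinr_zero_gain h xi Pt s2 ord sigma j : h j = 0 -> sinr h xi Pt s2 ord sigma j = 0.
Proof. by move=> hj0; rewrite /sinr hj0 mulmx0 scaler0 mxE. Qed.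

Lemma sinr_interference_free h xi Pt s2 ord sigma j : s2 != 0 ->
  (forall k, sigma k -> (ord j < ord k)%N -> h k = 0) ->
  sinr h xi Pt s2 ord sigma j = xi ^+ 2 * Pt ^+ 2 / s2 * \sum_i h j i ord0 ^+ 2.
Proof.
move=> s20 later0; rewrite /sinr big1 => [|k /andP[sk jk]]; last first.
  by rewrite later0 // trmx0 mulmx0 scaler0.
rewrite add0r invmx_scalar mul_mx_scalar -scalemxAl !mxE mulrA; congr (_ * _).
by apply: eq_bigr => i _; rewrite !mxE.
Qed.

End Sinr.

Lemma log2_gt0 (R : realType) (x : R) : 1 < x -> 0 < log2 x.
Proof. by move=> x1; rewrite /log2 divr_gt0 ?ln_gt0 ?ltr1n. Qed.

Section SingleUser.
Variables (R : realType) (M N : nat) (j0 : 'I_N).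
Implicit Types (sigma : state N) (ord : {perm 'I_N}).

Definition single_user_gain : 'I_N -> 'cV[R]_M :=
  fun j => if j == j0 then const_mx 1 else 0.

Lemma rate_single_user B xi Pt s2 ord sigma j : s2 != 0 ->
  rate single_user_gain B xi Pt s2 ord sigma j =
  if (j == j0) && feasible_state M sigma && sigma j
  then B * log2 (1 + xi ^+ 2 * Pt ^+ 2 / s2 * M%:R) else 0.
Proof.
move=> s20; rewrite /rate; have [-> | j_neq] := eqVneq j j0; last first.
  rewrite sinr_zero_gain; last by rewrite /single_user_gain (negbTE j_neq).
  by rewrite addr0 /log2 ln1 mul0r mulr0; case: ifP.
rewrite sinr_interference_free // => [|k _ j0k]; last first.
  by rewrite /single_user_gain ifN //; apply: contraTneq j0k => ->; rewrite ltnn.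
rewrite /single_user_gain eqxx.
by under eq_bigr do rewrite mxE expr1n; rewrite sumr_const card_ord.
Qed.

Lemma sum_rate_obj_single_user beta B xi Pt s2 ord p : s2 != 0 ->
  sum_rate_obj single_user_gain beta B xi Pt s2 ord p =
  B * log2 (1 + xi ^+ 2 * Pt ^+ 2 / s2 * M%:R) *
  \sum_(sigma : state N | feasible_state M sigma && sigma j0) state_prob p beta sigma.
Proof.
move=> s20; rewrite /sum_rate_obj big_mkcondr mulr_sumr; apply: eq_bigr => sigma feas.
rewrite (bigD1 j0) //= big1 => [|j j_neq]; last first.
  by rewrite rate_single_user // (negbTE j_neq) !mul0r.
by rewrite rate_single_user // eqxx feas addr0; case: (sigma j0); rewrite ?mulr1 ?mul0r ?mulr0.
Qed.

End SingleUser.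

Section Counterexample.
Variables (R : realType) (M N : nat).
Hypotheses (M_gt0 : (0 < M)%N) (ltMN : (M < N)%N).
Let leMN : (M <= N)%N := ltnW ltMN.

Definition first_device : 'I_N := Ordinal (ltn_trans M_gt0 ltMN).

Definition access (a q : R) : 'I_N -> R :=
  fun k => if k == first_device then a else if (k < M)%N then 1 else q.

Lemma convex_comb_access t a q a' q' :
  convex_comb t (access a q) (access a' q') =
  access (t * a + (1 - t) * a') (t * q + (1 - t) * q').
Proof.
apply: funext => k; rewrite /convex_comb /access.
by case: ifP => _ //; case: ifP => _ //; rewrite -mulrDl addrC subrK mulr1.
Qed.

Lemma sum_rate_obj_access a q :
  sum_rate_obj (single_user_gain R M first_device) (fun _ => 1) 1 1 1 1 1%g (access a q) =
  log2 (1 + M%:R) * (a * (1 - q) ^+ (N - M)).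
Proof.
rewrite sum_rate_obj_single_user ?oner_neq0 // expr1n divr1 !mul1r.
rewrite sum_prob_feasible_active ?leMN //; last first.
  by move=> k kM /negbTE k_neq; rewrite /access k_neq kM mulr1.
rewrite state_prob_prefix ?leMN //; congr (_ * (_ * _)).
  rewrite (bigD1 first_device) //= big1 => [|k /andP[kM /negbTE k_neq]].
    by rewrite /access eqxx !mulr1.
  by rewrite /access k_neq kM mulr1.
rewrite -(card_prefixC leMN) -prodr_const; apply: eq_bigr => k kM.
by rewrite /access ifN ?(negbTE kM) ?mulr1 //; apply: contraNneq kM => ->.
Qed.

Lemma feasible_access a q : 0 < a <= 1 -> 0 < q <= 1 ->
  feasible_set (single_user_gain R M first_device) (fun _ => 1) (fun _ => 1) (fun _ => 0)
    1 1 1 1 1%g (access a q).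
Proof.
move=> a01 q01 j.
have access01 k : 0 < access a q k <= 1.
  by rewrite /access; case: ifP => _; [|case: ifP => _]; rewrite ?ltr01 ?lexx.
split => //; apply: eff_cap_ge0 => [|sigma|k]; first exact: ltr01.
  rewrite rate_single_user ?oner_neq0 //; case: ifP => _ //; rewrite mul1r ltW //.
  by apply: log2_gt0; rewrite expr1n divr1 !mul1r ltrDl ltr0n.
by rewrite mulr1; have /andP[/ltW -> ->] := access01 k.
Qed.

End Counterexample.

Lemma access_mass_midpoint_gap (R : realType) (K : nat) : (0 < K)%N ->
  3/4 * (1 - 3/4) ^+ K < 1/2 * (1 * (1 - 1/2) ^+ K) + (1 - 1/2) * (1/2 * (1 - 1) ^+ K) :> R.
Proof.
move=> K_gt0; set u := (1/2 : R) ^+ K.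
have u_gt0 : 0 < u by rewrite exprn_gt0.
have u_le : u <= 1/2.
  by rewrite /u -(prednK K_gt0) exprS ler_piMr ?exprn_ege0 ?exprn_ile1 //; lra.
have -> : (1 - 1 : R) ^+ K = 0 by rewrite subrr expr0n gtn_eqF.
have -> : (1 - 3/4 : R) ^+ K = u * u by rewrite -exprMn; congr (_ ^+ _); lra.
have -> : (1 - 1/2 : R) = 1/2 by lra.
rewrite -/u; nra.
Qed.

Theorem theorem3p1 (R : realType) (M N : nat) (hM : (0 < M)%N) (hMN : (M < N)%N) :
  exists (h : 'I_N -> 'cV[R]_M) (beta theta EB : 'I_N -> R) (B xi Pt s2 : R)
         (ord : {perm 'I_N}),
    (forall j i, 0 <= h j i ord0) /\
    (forall j, 0 < beta j <= 1) /\
    (forall j, 0 < theta j) /\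
    (forall j, 0 <= EB j) /\
    0 < B /\ 0 < xi /\ 0 < Pt /\ 0 < s2 /\
    ~ concave_max_problem (feasible_set h beta theta EB B xi Pt s2 ord)
                          (sum_rate_obj h beta B xi Pt s2 ord).
Proof.
exists (single_user_gain R M (first_device hM hMN)), (fun _ => 1), (fun _ => 1), (fun _ => 0),
  1, 1, 1, 1, 1%g.
split; first by move=> j i; rewrite /single_user_gain; case: ifP => _; rewrite mxE.
split; first by move=> j; rewrite ltr01 lexx.
split; first by move=> j; rewrite ltr01.
split; first by [].
do 4 (split; first exact: ltr01).
move=> [_ concave_obj].
have x_feas := @feasible_access R M N hM hMN 1 (1/2) ltac:(lra) ltac:(lra).
have y_feas := @feasible_access R M N hM hMN (1/2) 1 ltac:(lra) ltac:(lra).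
have := concave_obj _ _ (1/2) x_feas y_feas ltac:(lra); rewrite convex_comb_access.
have -> : 1/2 * 1 + (1 - 1/2) * (1/2) = 3/4 :> R by lra.
have -> : 1/2 * (1/2) + (1 - 1/2) * 1 = 3/4 :> R by lra.
have rate_gt0 : 0 < log2 (1 + M%:R : R) by rewrite log2_gt0 // ltrDl ltr0n.
rewrite !sum_rate_obj_access !(mulrCA _ (log2 _)) -mulrDr ler_pM2l //.
by apply/negP; rewrite -ltNge access_mass_midpoint_gap // subn_gt0.
Qed.
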